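(* Let $R$ be a (unital, not necessarily associative) ring and let $\sigma\colon R\to R$ be an additive bijection with $\sigma(1)=1$. Let $S=R[X^{\pm};\sigma]$ and let $T=R[X;\sigma,0]\subseteq S$. If $I$ is a left ideal of $S$, then $I=S(I\cap T)$. If $I$ is a right ideal of $S$, then $I=(I\cap T)S$.
   Context: A left (right) ideal of a non-associative ring $S$ is an additive subgroup $I$ with $sI\subseteq I$ ($Is\subseteq I$) for all $s\in S$. $S=R[X^{\pm};\sigma]$ is the additive group of formal sums $\sum_{i\in\mathbb{Z}} r_iX^i$ ($r_i\in R$, finitely many non-zero) with pointwise addition and multiplication the biadditive extension of $(rX^m)(sX^n)=(r\sigma^m(s))X^{m+n}$ for $r,s\in R$, $m,n\in\mathbb{Z}$. $T=R[X;\sigma,0]$ is the subset of $S$ of elements with $r_i=0$ for all $i<0$ (with the same multiplication, i.e. the non-associative Ore extension with $\delta=0$). For subsets $A,B\subseteq S$, $AB$ denotes the set of finite sums $\sum a_kb_k$ with $a_k\in A$, $b_k\in B$. *)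

From HB Require Import structures.
From mathcomp Require Import all_boot all_order all_algebra.
From mathcomp Require Import finmap.
Set Implicit Arguments. Unset Strict Implicit. Unset Printing Implicit Defensive.
Import Order.TTheory GRing.Theory Num.Theory.
Local Open Scope fset_scope.
Local Open Scope ring_scope.

Definition nonassoc_unital_ring (R : zmodType) (mul : R -> R -> R) (one : R) :=
  [/\ forall x y z, mul (x + y) z = mul x z + mul y z,
      forall x y z, mul x (y + z) = mul x y + mul x z,
      forall x, mul one x = x
    & forall x, mul x one = x].

Definition sigpow (R : Type) (sigma sigmainv : R -> R) (m : int) : R -> R :=
  match m with
  | Posz n => iter n sigma
  | Negz n => iter n.+1 sigmainv
  end.

(* The additive group of R[X^{+-};sigma]: finitely supported maps int -> R,
   the coefficient at i being r_i. *)
Definition Laurent (R : zmodType) := {fsfun int -> R with 0}.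

Definition Ladd (R : zmodType) (f g : Laurent R) : Laurent R :=
  [fsfun k in (finsupp f `|` finsupp g)%fset => f k + g k | 0].

Definition Lzero (R : zmodType) : Laurent R := [fsfun for fun _ => 0 : R].

(* (sum_i f_i X^i)(sum_j g_j X^j) = sum_k (sum_{i+j=k} f_i sigma^i(g_j)) X^k *)
Definition Lmul (R : zmodType) (mul : R -> R -> R) (sigma sigmainv : R -> R)
  (f g : Laurent R) : Laurent R :=
  [fsfun k in [fset (i + j)%R | i in finsupp f, j in finsupp g]%fset =>
     \sum_(i <- finsupp f) mul (f i) (sigpow sigma sigmainv i (g (k - i)%R)) | 0].

(* T = R[X;sigma,0]: elements with r_i = 0 for all i < 0 *)
Definition inT (R : zmodType) (f : Laurent R) : Prop :=
  forall i : int, (i < 0)%R -> f i = 0.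

Definition Lopp (R : zmodType) (f : Laurent R) : Laurent R :=
  [fsfun k in finsupp f => - f k | 0].

Definition add_subgroup (R : zmodType) (I : Laurent R -> Prop) : Prop :=
  [/\ I (Lzero R),
      forall x y, I x -> I y -> I (Ladd x y)
    & forall x, I x -> I (Lopp x)].

Definition left_ideal (R : zmodType) (mul : R -> R -> R) (sigma sigmainv : R -> R)
  (I : Laurent R -> Prop) : Prop :=
  add_subgroup I /\ forall s x, I x -> I (Lmul mul sigma sigmainv s x).

Definition right_ideal (R : zmodType) (mul : R -> R -> R) (sigma sigmainv : R -> R)
  (I : Laurent R -> Prop) : Prop :=
  add_subgroup I /\ forall s x, I x -> I (Lmul mul sigma sigmainv x s).

Definition Lsetmul (R : zmodType) (mul : R -> R -> R) (sigma sigmainv : R -> R)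
  (A B : Laurent R -> Prop) : Laurent R -> Prop :=
  fun x => exists s : seq (Laurent R * Laurent R),
    (forall p, p \in s -> A p.1 /\ B p.2) /\
    x = foldr (fun p acc => Ladd (Lmul mul sigma sigmainv p.1 p.2) acc) (Lzero R) s.

(* If x lies in I, its support is bounded below by some -N.  In a left ideal
   X^N x then lies in I and in T, and x = X^-N (X^N x) because sigma^-N undoes
   the twist sigma^N; in a right ideal x X^N lies in I and in T (this uses
   sigma(1) = 1) and x = (x X^N) X^-N. *)
From mathcomp Require Import all_boot all_order all_algebra.
From mathcomp Require Import finmap.
Set Implicit Arguments. Unset Strict Implicit. Unset Printing Implicit Defensive.
Import Order.TTheory GRing.Theory Num.Theory.
Local Open Scope ring_scope.

Definition Lmonomial (R : zmodType) (a : int) (r : R) : Laurent R :=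
  [fsfun k in [fset a]%fset => r | 0].

Lemma LmonomialE (R : zmodType) (a : int) (r : R) k :
  Lmonomial a r k = if k == a then r else 0.
Proof. by rewrite fsfunE in_fset1. Qed.

Lemma Ladd0r (R : zmodType) (x : Laurent R) : Ladd x (Lzero R) = x.
Proof.
apply/fsfunP => k; rewrite fsfunE [Lzero R k]fsfunE addr0.
by case: ifP => // /negbT; rewrite inE negb_or memNfinsupp => /andP[/eqP].
Qed.

Lemma Laurent_bounded_below (R : zmodType) (x : Laurent R) :
  exists N : nat, forall i, i < - N%:Z -> x i = 0.
Proof.
exists (\max_(j <- finsupp x) `|j|)%N => i lt_i; apply/eqP; rewrite -memNfinsupp.
apply: contraTN lt_i => supp_i; rewrite -leNgt lerNl.
rewrite (le_trans (ler_norm _)) // -abszE lez_nat abszN.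
exact: (leq_bigmax_seq i supp_i).
Qed.

Lemma sum_seq_single (I : eqType) (R : zmodType) (s : seq I) (F : I -> R) c :
  uniq s -> (forall i, i != c -> F i = 0) -> (c \notin s -> F c = 0) ->
  \sum_(i <- s) F i = F c.
Proof.
move=> uniq_s F0 Fc0; have [c_s | c_s] := boolP (c \in s).
  by rewrite (bigD1_seq c) //= big1 ?addr0 // => i /F0.
rewrite Fc0 // big1_seq // => i /andP[_ i_s]; apply: F0.
by apply: contraNneq c_s => <-.
Qed.

Lemma iter_can (T : Type) (f g : T -> T) n :
  cancel f g -> cancel (iter n f) (iter n g).
Proof. by move=> fK; elim: n => // n IHn v; rewrite iterSr iterS fK IHn. Qed.

Section TwistedLaurent.

Variables (R : zmodType) (mul : R -> R -> R) (sigma sigmainv : R -> R).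

Local Notation lmul := (Lmul mul sigma sigmainv).
Local Notation sigp := (sigpow sigma sigmainv).
Local Notation setmul := (Lsetmul mul sigma sigmainv).

Lemma Lsetmul_pair (A B : Laurent R -> Prop) a b :
  A a -> B b -> setmul A B (lmul a b).
Proof. by exists [:: (a, b)]; split => [p /[1!inE] /eqP -> //|]; rewrite /= Ladd0r. Qed.

Lemma Lsetmul_sub (A B I : Laurent R -> Prop) :
  add_subgroup I -> (forall a b, A a -> B b -> I (lmul a b)) ->
  forall x, setmul A B x -> I x.
Proof.
case=> I0 ID _ IM _ [s [sAB ->]]; elim: s sAB => //= p s IHs sAB.
have [Ap1 Bp2] := sAB p (mem_head _ _).
by apply: ID; [exact: IM | apply: IHs => q qs; apply: sAB; rewrite inE qs orbT].
Qed.

Hypothesis mulDl : forall x y z, mul (x + y) z = mul x z + mul y z.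
Hypothesis mulDr : forall x y z, mul x (y + z) = mul x y + mul x z.
Hypothesis sigmaD : {morph sigma : x y / x + y}.
Hypothesis sigmaK : cancel sigma sigmainv.

Lemma mul0x x : mul 0 x = 0.
Proof. by apply: (@addrI _ (mul 0 x)); rewrite -mulDl !addr0. Qed.

Lemma mulx0 x : mul x 0 = 0.
Proof. by apply: (@addrI _ (mul x 0)); rewrite -mulDr !addr0. Qed.

Lemma sigpow_fix i v : sigma v = v -> sigp i v = v.
Proof.
move=> sigma_v; have sigmainv_v : sigmainv v = v by rewrite -{1}sigma_v sigmaK.
by case: i => n; apply: iter_fix.
Qed.

Lemma sigpow0 i : sigp i 0 = 0.
Proof. by apply: sigpow_fix; apply: (@addrI _ (sigma 0)); rewrite -sigmaD !addr0. Qed.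

Lemma sigpowNK (n : nat) v : sigp (- n%:Z) (sigp n v) = v.
Proof. by case: n => [|n] //; apply: iter_can. Qed.

Lemma LmulE f g k :
  lmul f g k = \sum_(i <- finsupp f) mul (f i) (sigp i (g (k - i))).
Proof.
rewrite fsfunE; case: ifPn => // k_notin; symmetry.
rewrite big1_seq // => i /andP[_ f_i]; case: (finsuppP g (k - i)) => [_ | g_ki].
  by rewrite sigpow0 mulx0.
by case/imfset2P: k_notin; exists i => //; exists (k - i); rewrite // subrKC.
Qed.

Variable one : R.
Hypothesis mul1x : forall x, mul one x = x.
Hypothesis mulx1 : forall x, mul x one = x.
Hypothesis sigma1 : sigma one = one.

Lemma Lmul_monomial1l a f k : lmul (Lmonomial a one) f k = sigp a (f (k - a)).
Proof.
rewrite LmulE (@sum_seq_single _ _ _ _ a) ?fset_uniq //.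
- by rewrite LmonomialE eqxx mul1x.
- by move=> i /negPf i_a; rewrite LmonomialE i_a mul0x.
- by rewrite memNfinsupp LmonomialE eqxx => /eqP ->; rewrite mul0x.
Qed.

Lemma Lmul_monomial1r a f k : lmul f (Lmonomial a one) k = f (k - a).
Proof.
rewrite LmulE (@sum_seq_single _ _ _ _ (k - a)) ?fset_uniq //.
- by rewrite subKr LmonomialE eqxx sigpow_fix // mulx1.
- move=> i i_ka; rewrite LmonomialE; case: eqP => [ki_a | _]; last by rewrite sigpow0 mulx0.
  by case/eqP: i_ka; rewrite -ki_a subKr.
- by rewrite memNfinsupp => /eqP ->; rewrite mul0x.
Qed.

Lemma Lmul_monomial1lNK (n : nat) x :
  lmul (Lmonomial (- n%:Z) one) (lmul (Lmonomial n one) x) = x.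
Proof. by apply/fsfunP => k; rewrite !Lmul_monomial1l opprK addrK sigpowNK. Qed.

Lemma Lmul_monomial1rNK (n : nat) x :
  lmul (lmul x (Lmonomial n one)) (Lmonomial (- n%:Z) one) = x.
Proof. by apply/fsfunP => k; rewrite !Lmul_monomial1r opprK addrK. Qed.

Lemma inT_Lmul_monomial1l (n : nat) (x : Laurent R) :
  (forall i, i < - n%:Z -> x i = 0) -> inT (lmul (Lmonomial n one) x).
Proof. by move=> x0 i i_lt0; rewrite Lmul_monomial1l x0 ?sigpow0 // ltrBlDr addNr. Qed.

Lemma inT_Lmul_monomial1r (n : nat) (x : Laurent R) :
  (forall i, i < - n%:Z -> x i = 0) -> inT (lmul x (Lmonomial n one)).
Proof. by move=> x0 i i_lt0; rewrite Lmul_monomial1r x0 // ltrBlDr addNr. Qed.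

Lemma left_idealE (I : Laurent R -> Prop) : left_ideal mul sigma sigmainv I ->
  forall x, I x <-> setmul (fun _ => True) (fun y => I y /\ inT y) x.
Proof.
case=> subI mulI x; split; last by apply: Lsetmul_sub => // a b _ [Ib _]; apply: mulI.
move=> Ix; have [n x0] := Laurent_bounded_below x.
rewrite -(Lmul_monomial1lNK n x); apply: Lsetmul_pair => //.
by split; [apply: mulI | apply: inT_Lmul_monomial1l].
Qed.

Lemma right_idealE (I : Laurent R -> Prop) : right_ideal mul sigma sigmainv I ->
  forall x, I x <-> setmul (fun y => I y /\ inT y) (fun _ => True) x.
Proof.
case=> subI mulI x; split; last by apply: Lsetmul_sub => // a b [Ia _] _; apply: mulI.
move=> Ix; have [n x0] := Laurent_bounded_below x.
rewrite -(Lmul_monomial1rNK n x); apply: Lsetmul_pair => //.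
by split; [apply: mulI | apply: inT_Lmul_monomial1r].
Qed.

End TwistedLaurent.

Theorem proposition17 (R : zmodType) (mul : R -> R -> R) (one : R)
  (sigma sigmainv : R -> R) :
  nonassoc_unital_ring mul one ->
  {morph sigma : x y / x + y} ->
  cancel sigma sigmainv -> cancel sigmainv sigma ->
  sigma one = one ->
  (forall I : Laurent R -> Prop, left_ideal mul sigma sigmainv I ->
     forall x, I x <->
       Lsetmul mul sigma sigmainv (fun _ => True) (fun y => I y /\ inT y) x) /\
  (forall I : Laurent R -> Prop, right_ideal mul sigma sigmainv I ->
     forall x, I x <->
       Lsetmul mul sigma sigmainv (fun y => I y /\ inT y) (fun _ => True) x).
Proof.
move=> [mulDl mulDr mul1x mulx1] sigmaD sigmaK _ sigma1.
split=> I; first exact: (left_idealE mulDl mulDr sigmaD sigmaK mul1x).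
exact: (right_idealE mulDl mulDr sigmaD sigmaK mulx1 sigma1).
Qed.
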